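(* Let $(A,\mathcal N,\mathcal P,\lambda)$ be a game, $(\sigma,\phi)$ and $(\tau,\psi)$ uniform strategies on $A$, and $f:\sigma\to\tau$ a weak map of uniform strategies. Then: (1) $f$ is a map of event structures with symmetry $(\sigma,\mathcal S_\phi(\sigma))\to(\tau,\mathcal S_\psi(\tau))$; and (2) for every $x\in\mathrm{Conf}(\sigma)$ there exists $\theta\in\mathcal S_{\mathcal P}(A)$, $\theta:p_\sigma(x)\cong p_\tau(f(x))$, such that $\theta(p_\sigma(s))=p_\tau(f(s))$ for all $s\in x$.
   Context: Event structure: a set with a partial order $\leq$ with finitely many elements below each element, an irreflexive symmetric hereditary conflict $\#$ (if $a\leq a'$, $a\#b$ then $a'\#b$), and polarity into $\{-,+\}$. Configurations: finite down-closed conflict-free subsets, $\mathrm{Conf}(\cdot)$. $x\subseteq^+y$ (resp. $\subseteq^-$): $x\subseteq y$ with $y\setminus x$ all positive (resp. negative). Map of event structures: polarity-preserving function mapping configurations to configurations and injective on each configuration. Automorphism: bijection preserving and reflecting $\leq,\#$, polarity; it fixes $x$ if identity on $x$; negative if whenever it fixes $x$ and $x\subseteq^+y$ it fixes $y$; positive likewise with $\subseteq^-$. Group actions are homomorphisms into automorphism groups. A game $(A,\mathcal N,\mathcal P,\lambda)$: $\mathcal N$ a group acting on $A$ by negative automorphisms, $\mathcal P$ by positive automorphisms, $\lambda:\mathcal N\times\mathcal P\to\mathcal P\times\mathcal N$ with (i) $\lambda(e,\beta)=(\beta,e)$, $\lambda(\alpha,e)=(e,\alpha)$; (ii) if $\lambda(\alpha',\beta)=(\beta_1,\alpha_1)$,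 $\lambda(\alpha,\beta_1)=(\beta_2,\alpha_2)$ then $\lambda(\alpha\alpha',\beta)=(\beta_2,\alpha_2\alpha_1)$; (iii) if $\lambda(\alpha,\beta)=(\beta_1,\alpha_1)$, $\lambda(\alpha_1,\beta')=(\beta_2,\alpha_2)$ then $\lambda(\alpha,\beta\beta')=(\beta_1\beta_2,\alpha_2)$; (iv) if $\lambda(\alpha,\beta)=(\beta',\alpha')$ then $\alpha(\beta(a))=\beta'(\alpha'(a))$ for all $a$. For a group $G$ acting on $A$, $\mathcal S_G(A)$ is the set of bijections $x\cong g(x)$ ($x\in\mathrm{Conf}(A)$, $g\in G$) obtained by restricting $g$ to $x$. Strategy on $A$: event structure $\sigma$ with map $p_\sigma:\sigma\to A$ such that for every $x\in\mathrm{Conf}(\sigma)$: if $p_\sigma(x)\subseteq^-z$ there is a unique $y\in\mathrm{Conf}(\sigma)$ with $x\subseteq y$, $p_\sigma(y)=z$; if $z\subseteq^+p_\sigma(x)$ there is $y\subseteq x$ in $\mathrm{Conf}(\sigma)$ with $p_\sigma(y)=z$. Weak map $\sigma\to\tau$: a map $f$ with $f[x]\in\mathcal P$ ($x\in\mathrm{Conf}(\sigma)$) such that $f[x](p_\tau(f(s)))=p_\sigma(s)$ for $s\in x$. $\alpha\cdot\sigma$ is $\sigma$ with projection $\alpha\circ p_\sigma$. Uniform strategy: strategy $\sigma$ with weak maps $\phi_\alpha:\alpha\cdot\sigma\to\sigma$ ($\alpha\in\mathcal N$) such that for all $x$: $\phi_e(x)=x$, $\phi_e[x]=e$; and for all $\alpha,\alpha'$,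 with $y=\phi_\alpha(x)$, $(\gamma,\beta)=\lambda(\alpha',\phi_\alpha[x])$: $\phi_{\alpha'\alpha}(x)=\phi_\beta(y)$ and $\phi_{\alpha'\alpha}[x]=\gamma\,\phi_\beta[y]$. A weak map of uniform strategies $(\sigma,\phi)\to(\tau,\psi)$ is a weak map $f:\sigma\to\tau$ such that for all $\alpha\in\mathcal N$, $x\in\mathrm{Conf}(\sigma)$, writing $(\beta',\alpha')=\lambda(\alpha,f[x])$: $f(\phi_\alpha(x))=\psi_{\alpha'}(f(x))$ and $\phi_\alpha[x]\,f[\phi_\alpha(x)]=\beta'\,\psi_{\alpha'}[f(x)]$ (i.e. $x\mapsto(f[x],f(x))$ is a homomorphism of algebras for the lifting of the monad $\mathcal N\times(-)$ to the Kleisli category of $\mathcal P\times(-)$). $\mathcal S_\phi(\sigma)$ is the set of bijections $x\cong\phi_\alpha(x)$ obtained by restricting $\phi_\alpha$ to $x\in\mathrm{Conf}(\sigma)$, $\alpha\in\mathcal N$. A map of event structures with symmetry $(E,\mathcal S_E)\to(F,\mathcal S_F)$ (where $\mathcal S_E,\mathcal S_F$ are sets of bijections between configurations) is a map of event structures $f$ such that for every $\theta:x\cong y$ in $\mathcal S_E$ the bijection $f(x)\cong f(y)$, $f(a)\mapsto f(\theta(a))$, is in $\mathcal S_F$. *)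

From Stdlib Require Import List.
Set Implicit Arguments.
Unset Strict Implicit.

Inductive polarity := Neg | Pos.

Record evstruct := EvStruct {
  ev :> Type;
  leq : ev -> ev -> Prop;
  cfl : ev -> ev -> Prop;
  pol : ev -> polarity;
  leq_refl : forall a, leq a a;
  leq_trans : forall a b c, leq a b -> leq b c -> leq a c;
  leq_antisym : forall a b, leq a b -> leq b a -> a = b;
  leq_fin : forall b, exists l : list ev, forall a, leq a b -> In a l;
  cfl_irrefl : forall a, ~ cfl a a;
  cfl_sym : forall a b, cfl a b -> cfl b a;
  cfl_her : forall a a' b, leq a a' -> cfl a b -> cfl a' b
}.

Arguments leq {e}.
Arguments cfl {e}.
Arguments pol {e}.

Definition set (T : Type) := T -> Prop.
Definition subset {T} (x y : set T) := forall a, x a -> y a.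
Definition seteq {T} (x y : set T) := forall a, x a <-> y a.
Definition image {T U} (f : T -> U) (x : set T) : set U :=
  fun b => exists a, x a /\ b = f a.

Definition config {E : evstruct} (x : set E) : Prop :=
  (exists l : list E, forall a, x a -> In a l) /\
  (forall a b, leq a b -> x b -> x a) /\
  (forall a b, x a -> x b -> ~ cfl a b).

Definition sub_pos {E : evstruct} (x y : set E) :=
  subset x y /\ forall a, y a -> ~ x a -> pol a = Pos.
Definition sub_neg {E : evstruct} (x y : set E) :=
  subset x y /\ forall a, y a -> ~ x a -> pol a = Neg.

Definition esmap {E F : evstruct} (f : E -> F) : Prop :=
  (forall a, pol (f a) = pol a) /\
  (forall x : set E, config x -> config (image f x)) /\
  (forall x : set E, config x -> forall a b, x a -> x b -> f a = f b -> a = b).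

Definition automorphism {E : evstruct} (g : E -> E) : Prop :=
  (exists h : E -> E, (forall a, h (g a) = a) /\ (forall a, g (h a) = a)) /\
  (forall a b, leq a b <-> leq (g a) (g b)) /\
  (forall a b, cfl a b <-> cfl (g a) (g b)) /\
  (forall a, pol (g a) = pol a).

Definition fixes {E : evstruct} (g : E -> E) (x : set E) := forall a, x a -> g a = a.

Definition negative_aut {E : evstruct} (g : E -> E) : Prop :=
  automorphism g /\
  forall x y : set E, config x -> config y -> fixes g x -> sub_pos x y -> fixes g y.
Definition positive_aut {E : evstruct} (g : E -> E) : Prop :=
  automorphism g /\
  forall x y : set E, config x -> config y -> fixes g x -> sub_neg x y -> fixes g y.

Record group := Group {
  gcar :> Type;
  gmul : gcar -> gcar -> gcar;
  gone : gcar;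
  ginv : gcar -> gcar;
  gmulA : forall a b c, gmul a (gmul b c) = gmul (gmul a b) c;
  gmul1l : forall a, gmul gone a = a;
  gmul1r : forall a, gmul a gone = a;
  gmulVl : forall a, gmul (ginv a) a = gone;
  gmulVr : forall a, gmul a (ginv a) = gone
}.
Arguments gmul {g}.
Arguments gone {g}.
Arguments ginv {g}.

Definition group_action {G : group} {E : evstruct} (act : G -> E -> E) : Prop :=
  (forall g, automorphism (act g)) /\
  (forall a, act gone a = a) /\
  (forall g h a, act (gmul g h) a = act g (act h a)).

Record game := Game {
  gA : evstruct;
  gN : group;
  gP : group;
  actN : gN -> gA -> gA;
  actP : gP -> gA -> gA;
  lam : gN -> gP -> gP * gN;
  actN_action : group_action actN;
  actN_neg : forall a, negative_aut (actN a);
  actP_action : group_action actP;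
  actP_pos : forall b, positive_aut (actP b);
  lam_i1 : forall b, lam gone b = (b, gone);
  lam_i2 : forall a, lam a gone = (gone, a);
  lam_ii : forall a a' b b1 a1 b2 a2,
      lam a' b = (b1, a1) -> lam a b1 = (b2, a2) ->
      lam (gmul a a') b = (b2, gmul a2 a1);
  lam_iii : forall a b b' b1 a1 b2 a2,
      lam a b = (b1, a1) -> lam a1 b' = (b2, a2) ->
      lam a (gmul b b') = (gmul b1 b2, a2);
  lam_iv : forall a b b' a', lam a b = (b', a') ->
      forall e, actN a (actP b e) = actP b' (actN a' e)
}.
Arguments actN : clear implicits.
Arguments actP : clear implicits.
Arguments lam : clear implicits.

(** S_G(A): bijections x ≅ g(x) obtained by restricting g to a configuration x.
    A bijection X ≅ Y is represented by a function θ, relevant only on X. *)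
Definition sym_of_action {G : group} {E : evstruct} (act : G -> E -> E)
  (X Y : set E) (theta : E -> E) : Prop :=
  config X /\ exists g : G, seteq Y (image (act g) X) /\
                            forall a, X a -> theta a = act g a.

(** Maps of event structures with symmetry. A symmetry is a predicate on
    triples (x, y, θ) meaning "θ : x ≅ y belongs to the set". *)
Definition es_sym_map {E F : evstruct}
  (SE : set E -> set E -> (E -> E) -> Prop)
  (SF : set F -> set F -> (F -> F) -> Prop) (f : E -> F) : Prop :=
  esmap f /\
  forall x y theta, SE x y theta ->
    exists theta' : F -> F, SF (image f x) (image f y) theta' /\
                            forall a, x a -> theta' (f a) = f (theta a).

Definition strategy (G : game) {S : evstruct} (p : S -> gA G) : Prop :=
  esmap p /\
  (forall x : set S, config x -> forall z : set (gA G), config z ->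
     sub_neg (image p x) z ->
     exists y : set S, (config y /\ subset x y /\ seteq (image p y) z) /\
       forall y' : set S, config y' -> subset x y' -> seteq (image p y') z ->
                          seteq y y') /\
  (forall x : set S, config x -> forall z : set (gA G), config z ->
     sub_pos z (image p x) ->
     exists y : set S, config y /\ subset y x /\ seteq (image p y) z).

(** Weak maps (σ,pS) -> (τ,pT): f together with f[x] ∈ P. *)
Definition weak_map (G : game) {S T : evstruct} (pS : S -> gA G) (pT : T -> gA G)
  (f : S -> T) (fb : set S -> gP G) : Prop :=
  esmap f /\
  forall x : set S, config x -> forall s, x s -> actP G (fb x) (pT (f s)) = pS s.

(** Uniform strategies. φ α : α·σ -> σ, with φb α x = φ_α[x]. *)
Definition uniform_strategy (G : game) {S : evstruct} (pS : S -> gA G)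
  (phi : gN G -> S -> S) (phib : gN G -> set S -> gP G) : Prop :=
  strategy pS /\
  (forall a : gN G, weak_map (fun s => actN G a (pS s)) pS (phi a) (phib a)) /\
  (forall x : set S, config x -> seteq (image (phi gone) x) x /\ phib gone x = gone) /\
  (forall (a a' : gN G) (x : set S), config x ->
     forall (c : gP G) (b : gN G), lam G a' (phib a x) = (c, b) ->
       seteq (image (phi (gmul a' a)) x) (image (phi b) (image (phi a) x)) /\
       phib (gmul a' a) x = gmul c (phib b (image (phi a) x))).

Definition uniform_weak_map (G : game) {S T : evstruct}
  (pS : S -> gA G) (phi : gN G -> S -> S) (phib : gN G -> set S -> gP G)
  (pT : T -> gA G) (psi : gN G -> T -> T) (psib : gN G -> set T -> gP G)
  (f : S -> T) (fb : set S -> gP G) : Prop :=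
  weak_map pS pT f fb /\
  forall (a : gN G) (x : set S), config x ->
    forall (b' : gP G) (a' : gN G), lam G a (fb x) = (b', a') ->
      seteq (image f (image (phi a) x)) (image (psi a') (image f x)) /\
      gmul (phib a x) (fb (image (phi a) x)) = gmul b' (psib a' (image f x)).

Definition sym_of_uniform {N : group} {S : evstruct} (phi : N -> S -> S)
  (X Y : set S) (theta : S -> S) : Prop :=
  config X /\ exists a : N, seteq Y (image (phi a) X) /\
                            forall s, X s -> theta s = phi a s.

Set Implicit Arguments.
Unset Strict Implicit.

(* A weak map of uniform strategies f with (b', a') = λ(a, f[x]) intertwines
   φ_a and ψ_{a'} pointwise on x: both f(φ_a s) and ψ_{a'}(f s) lie in the
   configuration f(φ_a x) = ψ_{a'}(f x), and the two factorisations of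
   φ_a[x] f[φ_a x] = b' ψ_{a'}[f x] send both of their projections to a(p_σ s),
   so they coincide because p_τ is injective on configurations.  The
   symmetry of part (2) is the restriction of f[x]^-1 to p_σ x. *)

Section GroupAction.

Variables (G : group) (E : evstruct) (act : G -> E -> E).
Hypothesis act_action : group_action act.

Lemma action_one e : act gone e = e.
Proof. apply act_action. Qed.

Lemma action_mul g h e : act (gmul g h) e = act g (act h e).
Proof. apply act_action. Qed.

Lemma action_invK g e : act (ginv g) (act g e) = e.
Proof. now rewrite <- action_mul, gmulVl, action_one. Qed.

Lemma action_inj g e e' : act g e = act g e' -> e = e'.
Proof.
  intro Heq.
  now rewrite <- (action_invK g e), <- (action_invK g e'), Heq.
Qed.

End GroupAction.

Lemma seteq_trans {U} (x y z : set U) : seteq x y -> seteq y z -> seteq x z.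
Proof. intros Hxy Hyz a. specialize (Hxy a); specialize (Hyz a); tauto. Qed.

Lemma image_seteq {U V} (f : U -> V) (x y : set U) :
  seteq x y -> seteq (image f x) (image f y).
Proof.
  intros Hxy b; split; intros [a [Ha ->]]; exists a; split; auto; apply Hxy; auto.
Qed.

Lemma image_image_eq_in {U V V' W} (h : U -> V) (g : V -> W)
  (h' : U -> V') (g' : V' -> W) (x : set U) :
  (forall a, x a -> g (h a) = g' (h' a)) ->
  seteq (image g (image h x)) (image g' (image h' x)).
Proof.
  intros Heq w; split.
  - intros [v [[a [Ha ->]] ->]]. exists (h' a). split.
    + now exists a.
    + now apply Heq.
  - intros [v [[a [Ha ->]] ->]]. exists (h a). split.
    + now exists a.
    + symmetry; now apply Heq.
Qed.

Lemma image_in {U V} (f : U -> V) (x : set U) a : x a -> image f x (f a).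
Proof. now exists a. Qed.

Lemma esmap_config {E F : evstruct} (f : E -> F) (x : set E) :
  esmap f -> config x -> config (image f x).
Proof. intros Hf Hx. now apply Hf. Qed.

Lemma esmap_inj_in {E F : evstruct} (f : E -> F) (x : set E) a b :
  esmap f -> config x -> x a -> x b -> f a = f b -> a = b.
Proof. intros Hf Hx. now apply Hf. Qed.

Section WeakMap.

Variables (G : game) (S T : evstruct).
Variables (pS : S -> gA G) (pT : T -> gA G) (f : S -> T) (fb : set S -> gP G).
Hypothesis f_weak : weak_map pS pT f fb.

Lemma weak_map_config (x : set S) : config x -> config (image f x).
Proof. apply esmap_config, f_weak. Qed.

Lemma weak_map_proj (x : set S) s :
  config x -> x s -> actP G (fb x) (pT (f s)) = pS s.
Proof. intros Hx Hs. exact (proj2 f_weak x Hx s Hs). Qed.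

Lemma weak_map_proj_inv (x : set S) s :
  config x -> x s -> actP G (ginv (fb x)) (pS s) = pT (f s).
Proof.
  intros Hx Hs. rewrite <- (weak_map_proj Hx Hs).
  apply action_invK, actP_action.
Qed.

Lemma weak_map_proj_symmetry (x : set S) :
  esmap pS -> config x ->
  exists theta : gA G -> gA G,
    sym_of_action (actP G) (image pS x) (image pT (image f x)) theta /\
    (forall s, x s -> theta (pS s) = pT (f s)).
Proof.
  intros HpS Hx. exists (actP G (ginv (fb x))). split.
  - split; [now apply esmap_config|].
    exists (ginv (fb x)). split.
    + apply image_image_eq_in. intros s Hs. symmetry.
      now apply weak_map_proj_inv.
    + intros e [s [Hs ->]]. reflexivity.
  - intros s Hs. now apply weak_map_proj_inv.
Qed.

End WeakMap.

Section UniformWeakMap.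

Variables (G : game) (S T : evstruct).
Variables (pS : S -> gA G) (phi : gN G -> S -> S) (phib : gN G -> set S -> gP G).
Variables (pT : T -> gA G) (psi : gN G -> T -> T) (psib : gN G -> set T -> gP G).
Variables (f : S -> T) (fb : set S -> gP G).

Hypothesis pT_map : esmap pT.
Hypothesis phi_weak : forall a, weak_map (fun s => actN G a (pS s)) pS (phi a) (phib a).
Hypothesis psi_weak : forall a, weak_map (fun t => actN G a (pT t)) pT (psi a) (psib a).
Hypothesis f_uniform : uniform_weak_map pS phi phib pT psi psib f fb.

Let f_weak : weak_map pS pT f fb := proj1 f_uniform.

Lemma uniform_weak_map_image (a : gN G) (x : set S) b' a' :
  config x -> lam G a (fb x) = (b', a') ->
  seteq (image f (image (phi a) x)) (image (psi a') (image f x)).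
Proof. intros Hx Hlam. exact (proj1 (proj2 f_uniform a x Hx b' a' Hlam)). Qed.

Lemma uniform_weak_map_intertwines (a : gN G) (x : set S) b' a' s :
  config x -> lam G a (fb x) = (b', a') -> x s ->
  f (phi a s) = psi a' (f s).
Proof.
  intros Hx Hlam Hs.
  destruct (proj2 f_uniform a x Hx b' a' Hlam) as [Himg Hcocycle].
  assert (Hphix : config (image (phi a) x)) by now apply (weak_map_config (phi_weak a)).
  assert (Hfx : config (image f x)) by now apply (weak_map_config f_weak).
  assert (Hfphix : config (image f (image (phi a) x)))
    by now apply (weak_map_config f_weak).
  assert (Hleft : actP G (gmul (phib a x) (fb (image (phi a) x))) (pT (f (phi a s)))
                  = actN G a (pS s)).
  { rewrite (action_mul (actP_action G)).
    rewrite (weak_map_proj f_weak Hphix (image_in (phi a) Hs)).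
    exact (weak_map_proj (phi_weak a) Hx Hs). }
  assert (Hright : actP G (gmul b' (psib a' (image f x))) (pT (psi a' (f s)))
                   = actN G a (pS s)).
  { rewrite (action_mul (actP_action G)).
    rewrite (weak_map_proj (psi_weak a') Hfx (image_in f Hs)).
    rewrite <- (lam_iv Hlam).
    now rewrite (weak_map_proj f_weak Hx Hs). }
  rewrite Hcocycle, <- Hright in Hleft.
  apply (esmap_inj_in pT_map Hfphix).
  - apply image_in, image_in, Hs.
  - apply Himg, image_in, image_in, Hs.
  - exact (action_inj (actP_action G) Hleft).
Qed.

Lemma uniform_weak_map_sym_map :
  es_sym_map (sym_of_uniform phi) (sym_of_uniform psi) f.
Proof.
  split; [apply f_weak|].
  intros x y theta [Hx [a [Hy Htheta]]].
  destruct (lam G a (fb x)) as [b' a'] eqn:Hlam.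
  exists (psi a'). split.
  - split; [now apply (weak_map_config f_weak)|].
    exists a'. split; [|reflexivity].
    eapply seteq_trans.
    + apply image_seteq, Hy.
    + exact (uniform_weak_map_image Hx Hlam).
  - intros s Hs. rewrite (Htheta s Hs).
    symmetry; exact (uniform_weak_map_intertwines Hx Hlam Hs).
Qed.

End UniformWeakMap.

Theorem mainTheorem9 (G : game) (S T : evstruct)
  (pS : S -> gA G) (phi : gN G -> S -> S) (phib : gN G -> set S -> gP G)
  (pT : T -> gA G) (psi : gN G -> T -> T) (psib : gN G -> set T -> gP G)
  (f : S -> T) (fb : set S -> gP G) :
  uniform_strategy pS phi phib ->
  uniform_strategy pT psi psib ->
  uniform_weak_map pS phi phib pT psi psib f fb ->
  es_sym_map (sym_of_uniform phi) (sym_of_uniform psi) f /\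
  (forall x : set S, config x ->
     exists theta : gA G -> gA G,
       sym_of_action (actP G) (image pS x) (image pT (image f x)) theta /\
       (forall s, x s -> theta (pS s) = pT (f s))).
Proof.
  intros [[HpS _] [Hphi _]] [[HpT _] [Hpsi _]] Hf.
  split.
  - exact (uniform_weak_map_sym_map HpT Hphi Hpsi Hf).
  - intros x Hx. exact (weak_map_proj_symmetry (proj1 Hf) HpS Hx).
Qed.
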